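(* Let $R$ be an associative ring with identity and involution $*$, and let $a\in R^{\#}\cap R^{\dagger}$. Then $a\in R^{SEP}$ if and only if $(a(a^{\#})^*a^{\dagger})^k=(a^{\dagger}a^2)^k$ for both $k=2$ and $k=3$.
   Context: An involution on $R$ is a map $x\mapsto x^*$ with $(x^* )^*=x$, $(x+y)^*=x^*+y^*$, $(xy)^*=y^*x^*$. An element $a$ is Moore–Penrose invertible if there is $b$ with $aba=a$, $bab=b$, $(ab)^*=ab$, $(ba)^*=ba$; such $b$ is unique, denoted $a^{\dagger}$, and $R^{\dagger}$ is the set of such $a$. An element $a$ is group invertible if there is $b$ with $aba=a$, $bab=b$, $ab=ba$; such $b$ is unique, denoted $a^{\#}$, and $R^{\#}$ is the set of such $a$. For $a\in R^{\#}\cap R^{\dagger}$, $a$ is SEP if $a^*=a^{\dagger}=a^{\#}$; $R^{SEP}$ denotes the set of SEP elements. *)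

From mathcomp Require Import all_boot all_algebra.
Set Implicit Arguments. Unset Strict Implicit. Unset Printing Implicit Defensive.
Import GRing.Theory.
Local Open Scope ring_scope.

Definition involution (R : pzRingType) (star : R -> R) : Prop :=
  [/\ forall x, star (star x) = x,
      forall x y, star (x + y) = star x + star y &
      forall x y, star (x * y) = star y * star x].

Definition is_mp_inverse (R : pzRingType) (star : R -> R) (a b : R) : Prop :=
  [/\ a * b * a = a, b * a * b = b, star (a * b) = a * b & star (b * a) = b * a].

Definition is_group_inverse (R : pzRingType) (a b : R) : Prop :=
  [/\ a * b * a = a, b * a * b = b & a * b = b * a].

Definition mp_invertible (R : pzRingType) (star : R -> R) (a : R) : Prop :=
  exists b, is_mp_inverse star a b.

Definition group_invertible (R : pzRingType) (a : R) : Prop :=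
  exists b, is_group_inverse a b.

(* a is SEP: a in R^# ∩ R^† and a^* = a^† = a^# *)
Definition SEP (R : pzRingType) (star : R -> R) (a : R) : Prop :=
  exists b, [/\ is_mp_inverse star a b, is_group_inverse a b & star a = b].

(* a is SEP exactly when (a^#)^* = a; then a^# = a^dagger and both sides of
   the identities reduce to a^k.  Conversely, let u = a (a^#)^* a^dagger and
   v = a^dagger a^2.  Since a^dagger a (a^#)^* = (a^#)^*, one has
   u = (a a^* a^dagger) u^2, and v = v^2 a^#; an element of the form z x^2
   and one of the form y^2 w with equal squares and equal cubes coincide, so
   u = v.  This forces a = u = v, hence the self-adjoint idempotents
   a a^dagger and a^dagger a are equal, so a^dagger = a^#, and unwinding
   a = u gives (a^#)^* = a. *)

From mathcomp Require Import all_boot all_algebra.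
Set Implicit Arguments. Unset Strict Implicit. Unset Printing Implicit Defensive.
Import GRing.Theory.
Local Open Scope ring_scope.

Lemma sqr_cube_eq (R : pzRingType) (x y z w : R) :
  x = z * x ^+ 2 -> y = y ^+ 2 * w ->
  x ^+ 2 = y ^+ 2 -> x ^+ 3 = y ^+ 3 -> x = y.
Proof.
move=> xE yE sqrE cubeE.
have y2E : y ^+ 2 = y ^+ 3 * w by rewrite [in LHS]expr2 {2}yE mulrA -exprS.
transitivity (x ^+ 2 * w); last by rewrite sqrE -yE.
by rewrite [LHS]xE [in LHS]sqrE y2E -cubeE exprSr 2!mulrA -xE -expr2.
Qed.

Section GroupInverse.

Variables (R : pzRingType) (a g : R).
Hypothesis ag : is_group_inverse a g.

Lemma group_inverse_mulKl : g * a * a = a.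
Proof. by case: ag => aga _ ag_ga; rewrite -ag_ga aga. Qed.

Lemma group_inverse_mulKr : a * a * g = a.
Proof. by case: ag => aga _ ag_ga; rewrite -mulrA ag_ga mulrA aga. Qed.

Lemma group_inverse_mul_sqr : a * g * g = g.
Proof. by case: ag => _ gag ag_ga; rewrite ag_ga gag. Qed.

Lemma group_inverse_unique h : is_group_inverse a h -> h = g.
Proof.
case: ag => aga gag ag_ga [aha hah ah_ha].
have ha_ga : h * a = g * a.
  by rewrite -ah_ha -{1}aga ag_ga -!mulrA ah_ha (mulrA a) aha.
by rewrite -hah ha_ga -mulrA ah_ha ha_ga -ag_ga mulrA gag.
Qed.

End GroupInverse.

Section Involution.

Variables (R : pzRingType) (star : R -> R).
Hypothesis starK : involutive star.
Hypothesis starM : forall x y, star (x * y) = star y * star x.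

Lemma selfadjoint_eq (p q : R) :
  star p = p -> star q = q -> q * p = p -> p * q = q -> p = q.
Proof. by move=> sp sq qpp pqq; rewrite -sp -qpp starM sp sq pqq. Qed.

Lemma group_inverse_star (a g : R) :
  is_group_inverse a g -> is_group_inverse (star a) (star g).
Proof.
case=> aga gag ag_ga.
by split; rewrite -!starM ?mulrA ?aga ?gag // ag_ga.
Qed.

Lemma mp_inverse_mul_star (a d : R) :
  is_mp_inverse star a d -> d * a * star a = star a.
Proof.
by case=> ada _ _ sda; rewrite -[in RHS]ada -(mulrA a d a) starM sda.
Qed.

Lemma mp_inverse_unique (a d e : R) :
  is_mp_inverse star a d -> is_mp_inverse star a e -> d = e.
Proof.
case=> ada dad sad sda [aea eae sae sea].
have ad_ae : a * d = a * e.
  by rewrite -sad starM -{1}aea !starM mulrA -2!starM sad sae mulrA ada.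
have da_ea : d * a = e * a.
  rewrite -sda starM -{1}aea !starM mulrA -mulrA -2!starM sea sda.
  by rewrite -!mulrA (mulrA a) ada.
by rewrite -dad -mulrA ad_ae mulrA da_ea eae.
Qed.

Lemma mp_inverse_of_star_group_inverse (a g : R) :
  is_group_inverse a g -> star g = a -> is_mp_inverse star a g.
Proof.
case=> aga gag _ sga; have sag : star a = g by rewrite -sga starK.
by split; rewrite // starM ?sga ?sag.
Qed.

Lemma SEP_iff_star_group_inverse (a g : R) :
  is_group_inverse a g -> SEP star a <-> star g = a.
Proof.
move=> ag; split=> [[b [_ ab sab]] | sga].
  by rewrite (group_inverse_unique ab ag) -sab starK.
exists g; split=> //; first exact: mp_inverse_of_star_group_inverse.
by rewrite -sga starK.
Qed.

Section InversePair.

Variables (a d g : R).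
Hypothesis ad : is_mp_inverse star a d.
Hypothesis ag : is_group_inverse a g.

Local Notation S := (star g).
Local Notation u := (a * S * d).
Local Notation v := (d * a ^+ 2).

Lemma mp_mul_star_group_inverse : d * a * S = S.
Proof.
have sE := group_inverse_mul_sqr (group_inverse_star ag).
by rewrite -{1}sE !mulrA (mp_inverse_mul_star ad) sE.
Qed.

Lemma u_eq_mul_sqr : u = a * star a * d * u ^+ 2.
Proof.
have sE := group_inverse_mul_sqr (group_inverse_star ag).
have u2E : u ^+ 2 = a * S * S * d.
  rewrite expr2 -!mulrA (mulrA d) (mulrA (d * a)).
  by rewrite mp_mul_star_group_inverse !mulrA.
rewrite u2E -!mulrA (mulrA d) (mulrA (d * a)) mp_mul_star_group_inverse.
by rewrite (mulrA (star a)) (mulrA (star a * S)) sE mulrA.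
Qed.

Lemma v_eq_sqr_mul : v = v ^+ 2 * g.
Proof.
case: ad => ada _ _ _.
rewrite !expr2 -!mulrA (mulrA a a g) (group_inverse_mulKr ag).
by rewrite (mulrA a d) ada.
Qed.

Lemma eq_u_of_eq_uv : u = v -> a = u.
Proof.
case: ad => ada _ _ _ uv.
have aa : a * a = a * u by rewrite uv expr2 !mulrA ada.
rewrite -[LHS](group_inverse_mulKl ag) -mulrA aa.
by rewrite !mulrA (group_inverse_mulKl ag).
Qed.

Lemma mp_inverse_commute : a = v -> a * d = d * a.
Proof.
case: ad => ada _ sad sda aE.
have da_ag : d * a = a * g.
  by rewrite {2}aE expr2 -mulrA (group_inverse_mulKr ag).
apply: selfadjoint_eq => //.
  by rewrite !mulrA -(mulrA d) -expr2 -aE.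
by rewrite da_ag mulrA ada.
Qed.

Lemma mp_inverse_eq_group_inverse : a * d = d * a -> d = g.
Proof.
by case: ad => ada dad _ _ ad_da; apply: (group_inverse_unique ag); split.
Qed.

Lemma star_group_inverse_of_powers :
  u ^+ 2 = v ^+ 2 -> u ^+ 3 = v ^+ 3 -> S = a.
Proof.
move=> sqrE cubeE.
have uv := sqr_cube_eq u_eq_mul_sqr v_eq_sqr_mul sqrE cubeE.
have au := eq_u_of_eq_uv uv.
have ad_da := mp_inverse_commute (etrans au uv).
have dg := mp_inverse_eq_group_inverse ad_da.
have ga_Sd : g * a = S * d.
  by rewrite -[g in g * a]dg {1}au !mulrA mp_mul_star_group_inverse.
case: ad => _ _ sad _.
rewrite -[RHS](group_inverse_mulKl ag) ga_Sd -mulrA -ad_da -sad starM dg.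
by rewrite -!starM (group_inverse_mul_sqr ag).
Qed.

End InversePair.

End Involution.

Theorem theorem4p1 (R : pzRingType) (star : R -> R) (a adag ash : R) :
  involution star ->
  is_mp_inverse star a adag ->
  is_group_inverse a ash ->
  SEP star a <->
  ((a * star ash * adag) ^+ 2 = (adag * a ^+ 2) ^+ 2 /\
   (a * star ash * adag) ^+ 3 = (adag * a ^+ 2) ^+ 3).
Proof.
move=> [starK _ starM] a_adag a_ash.
apply: iff_trans (SEP_iff_star_group_inverse starK starM a_ash) _.
split=> [sga | [sqrE cubeE]]; last first.
  exact: (star_group_inverse_of_powers starM a_adag a_ash sqrE cubeE).
have adagE : adag = ash.
  apply: (mp_inverse_unique starM a_adag).
  exact: (mp_inverse_of_star_group_inverse starK starM a_ash sga).
have uE : a * star ash * adag = a.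
  by rewrite sga adagE (group_inverse_mulKr a_ash).
have vE : adag * a ^+ 2 = a.
  by rewrite adagE expr2 mulrA (group_inverse_mulKl a_ash).
by rewrite uE vE.
Qed.
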